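(* Let $\gamma\ge 1$ be a constant, $\kappa=\gamma^{1/4}$, and for $m\in\mathbb N$ let $n=\lfloor\gamma m\rfloor$, $N=n+m$. Let $b>0$ be a constant, $d=b\log N$, $p=d/\sqrt{mn}$. Let $\mathcal G$ be the random bipartite graph on $V_1=\{1,\dots,n\}$, $V_2=\{n+1,\dots,n+m\}$ in which each pair $\{x,y\}$, $x\in V_1,y\in V_2$, is an edge independently with probability $p$, and let $D^{(1)}=\mathrm{diag}\{D_x\}_{x\in V_1}$ be the diagonal matrix of degrees of the vertices in $V_1$. Let $h(u)=(1+u)\log(1+u)-u$ and assume $b>\kappa^2[h(\kappa^2-1)]^{-1}$. Then there exist constants $\epsilon>0$ and $\nu>0$ such that with probability at least $1-N^{-\nu}$, $$\|(I_n-d^{-1}D^{(1)})^{-1}\|\le\epsilon^{-1}.$$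
   Context: $\log$ is the natural logarithm; $\|\cdot\|$ is the operator norm. *)

From mathcomp Require Import all_boot all_order all_algebra.
From mathcomp Require Import all_classical all_reals all_analysis.
Import Order.TTheory GRing.Theory Num.Theory.
Set Implicit Arguments. Unset Strict Implicit. Unset Printing Implicit Defensive.
Local Open Scope ring_scope.
Local Open Scope classical_set_scope.

Definition hfun (R : realType) (u : R) : R := (1 + u) * ln (1 + u) - u.

Definition vnorm (R : realType) (k : nat) (v : 'cV[R]_k) : R :=
  Num.sqrt (\sum_(i < k) (v i 0) ^+ 2).

Definition opnorm (R : realType) (k l : nat) (A : 'M[R]_(k, l)) : R :=
  sup [set vnorm (A *m v) | v in [set v : 'cV[R]_l | vnorm v <= 1]].

Definition nfloor (R : realType) (gamma : R) (m : nat) : nat :=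
  Num.truncn (gamma * m%:R).

(* bipartite graphs between V1 = 'I_n and V2 = 'I_m: edge indicator for each pair *)
Definition bgraph (n m : nat) := {ffun 'I_n * 'I_m -> bool}.

Definition graph_weight (R : realType) (n m : nat) (p : R) (G : bgraph n m) : R :=
  \prod_(e : 'I_n * 'I_m) (if G e then p else 1 - p).

Definition gprob (R : realType) (n m : nat) (p : R) (E : pred (bgraph n m)) : R :=
  \sum_(G : bgraph n m | E G) graph_weight p G.

Definition deg1 (n m : nat) (G : bgraph n m) (x : 'I_n) : nat :=
  #|[set y : 'I_m | G (x, y)]|.

Definition Dmat1 (R : realType) (n m : nat) (G : bgraph n m) : 'M[R]_n :=
  diag_mx (\row_(x < n) (deg1 G x)%:R).

From mathcomp Require Import all_boot all_order all_algebra.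
From mathcomp Require Import all_classical all_reals all_analysis.
From mathcomp Require Import ring lra.
Import Order.TTheory GRing.Theory Num.Theory.
Set Implicit Arguments.
Unset Strict Implicit.
Unset Printing Implicit Defensive.
Local Open Scope ring_scope.

(* Each degree D_x is a sum of m independent Bernoulli(p) variables with mean
   m p = d sqrt (m / n), roughly d / a where a = kappa^2 = sqrt gamma.  The
   Chernoff bound with exponent ln a gives
     P (D_x >= (1 - eps) d) <= exp (- d ((1 - eps) ln a - (a - 1) / a - o(1))),
   and b (ln a - (a - 1) / a) = b h(a - 1) / a > 1, so for small eps and large m
   this is at most N^(-1-nu).  A union bound over the n <= N vertices of V1 shows
   that with probability at least 1 - N^(-nu) every D_x < (1 - eps) d; then
   I - D/d is diagonal with entries > eps, so its inverse has norm <= 1/eps. *)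

Section RandomBipartiteGraph.
Variables (R : realType) (n m : nat) (p : R).

Lemma sum_bgraph_prod (F : 'I_n * 'I_m -> bool -> R) :
  \sum_(G : bgraph n m) \prod_e F e (G e) = \prod_e (F e true + F e false).
Proof. by rewrite -bigA_distr_bigA; apply: eq_bigr => e _; rewrite big_bool. Qed.

Lemma sum_graph_weight : \sum_(G : bgraph n m) graph_weight p G = 1.
Proof.
rewrite (sum_bgraph_prod (fun _ b => if b then p else 1 - p)).
by apply: big1 => e _; rewrite addrC subrK.
Qed.

Lemma expr_deg1 (a : R) (G : bgraph n m) (x : 'I_n) :
  a ^+ deg1 G x = \prod_(e : 'I_n * 'I_m) (if (e.1 == x) && G e then a else 1).
Proof.
rewrite (_ : \prod_e _ = \prod_i \prod_j (if (i == x) && G (i, j) then a else 1));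
  last by rewrite pair_bigA; apply: eq_bigr => -[].
rewrite (bigD1 x) //= [X in _ * X]big1 ?mulr1; last first.
  by move=> i /negbTE xi; apply: big1 => j _; rewrite xi.
rewrite eqxx -big_mkcond prodr_const /deg1; congr (_ ^+ _).
by apply: eq_card => y; apply/idP/idP; rewrite in_setE.
Qed.

Lemma deg1_mgf (a : R) (x : 'I_n) :
  \sum_(G : bgraph n m) graph_weight p G * a ^+ deg1 G x = (1 - p + p * a) ^+ m.
Proof.
under eq_bigr => G _ do rewrite /graph_weight expr_deg1 -big_split.
rewrite (sum_bgraph_prod (fun e b => (if b then p else 1 - p) *
                                      (if (e.1 == x) && b then a else 1))).
rewrite (_ : \prod_e _ = \prod_(i < n) \prod_(j < m) (p * (if i == x then a else 1) + (1 - p)));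
  last by rewrite pair_bigA; apply: eq_bigr => -[i j] _; rewrite andbT andbF mulr1.
rewrite (bigD1 x) //= [X in _ * X]big1 ?mulr1; last first.
  by move=> i /negbTE xi; apply: big1 => j _; rewrite xi mulr1 addrC subrK.
by rewrite eqxx prodr_const card_ord addrC.
Qed.

Hypothesis p01 : 0 <= p <= 1.

Lemma graph_weight_ge0 (G : bgraph n m) : 0 <= graph_weight p G.
Proof.
case/andP: p01 => p0 p1; apply: prodr_ge0 => e _.
by case: (G e); rewrite ?subr_ge0.
Qed.

Lemma deg1_tail_markov (lam t : R) (x : 'I_n) : 0 <= lam ->
  gprob p (fun G : bgraph n m => t <= (deg1 G x)%:R) <=
    expR (- (lam * t)) * (1 - p + p * expR lam) ^+ m.
Proof.
move=> lam0; rewrite -(deg1_mgf (expR lam) x) mulr_sumr /gprob big_mkcond /=.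
apply: ler_sum => G _; rewrite mulrCA -expRM_natl -expRD.
have w0 := graph_weight_ge0 G.
case: ifP => [tD|_]; last by rewrite mulr_ge0 ?expR_ge0.
rewrite ler_peMr //; apply: le_trans (expR_ge1Dx _).
by rewrite lerDl addrC [_ * lam]mulrC -mulrBr mulr_ge0 // subr_ge0.
Qed.

Lemma deg1_chernoff (a t : R) (x : 'I_n) : 1 <= a ->
  gprob p (fun G : bgraph n m => t <= (deg1 G x)%:R) <=
    expR (- (t * ln a) + m%:R * p * (a - 1)).
Proof.
move=> a1; have a0 : 0 < a by apply: lt_le_trans a1.
apply: le_trans (deg1_tail_markov t x (ln_ge0 a1)) _.
rewrite lnK ?posrE // expRD [ln a * t]mulrC ler_wpM2l ?expR_ge0 //.
rewrite -mulrA expRM_natl; case/andP: p01 => p0 p1.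
have base : 1 - p + p * a = 1 + p * (a - 1) by ring.
apply: lerXn2r; rewrite ?nnegrE ?expR_ge0 // base ?expR_ge1Dx //.
by rewrite addr_ge0 // mulr_ge0 // subr_ge0.
Qed.

Lemma gprob_union_bound (E : pred (bgraph n m)) (B : 'I_n -> pred (bgraph n m)) :
  (forall G, (forall x, ~~ B x G) -> E G) ->
  1 - \sum_x gprob p (B x) <= gprob p E.
Proof.
move=> BE; rewrite -sum_graph_weight (bigID E) /= lerBlDr lerD2l /gprob.
under [X in _ <= X]eq_bigr => x _ do rewrite big_mkcond /=.
rewrite exchange_big /= [X in X <= _]big_mkcond /=.
apply: ler_sum => G _.
have terms_ge0 (P : pred 'I_n) :
    0 <= \sum_(y | P y) (if B y G then graph_weight p G else 0).
  by apply: sumr_ge0 => y _; case: ifP => // _; exact: graph_weight_ge0.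
case: ifP => [EG | _]; last exact: terms_ge0.
case: (pickP (B^~ G)) => [x Bx | noB]; last first.
  by move: EG; rewrite BE // => y; rewrite noB.
by rewrite (bigD1 x) //= Bx lerDl terms_ge0.
Qed.

End RandomBipartiteGraph.

Lemma diag_mx_unit_invmx (F : fieldType) n (r : 'rV[F]_n) :
  (forall i, r 0 i != 0) ->
  diag_mx r \in unitmx /\ invmx (diag_mx r) = diag_mx (map_mx GRing.inv r).
Proof.
move=> r_neq0.
have rrV : diag_mx r *m diag_mx (map_mx GRing.inv r) = 1%:M.
  rewrite mul_diag_mx; apply/matrixP => i j; rewrite !mxE.
  by case: eqP => [->|_]; rewrite ?mulr1n ?mulr0n ?mulr0 // divff.
have [r_unit _] := mulmx1_unit rrV.
by split=> //; rewrite -[invmx _]mulmx1 -rrV mulmxA mulVmx // mul1mx.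
Qed.

Lemma vnorm_diag_le (R : realType) n (r : 'rV[R]_n) (K : R) (v : 'cV_n) :
  0 <= K -> (forall i, `|r 0 i| <= K) -> vnorm (diag_mx r *m v) <= K * vnorm v.
Proof.
move=> K0 rK; rewrite /vnorm -[K]ger0_norm // -sqrtr_sqr -sqrtrM ?sqr_ge0 //.
apply: ler_wsqrtr; rewrite mulr_sumr; apply: ler_sum => i _.
rewrite mul_diag_mx !mxE exprMn ler_wpM2r ?sqr_ge0 // -real_normK ?num_real //.
by rewrite lerXn2r ?nnegrE // ger0_norm.
Qed.

Lemma opnorm_diag_le (R : realType) n (r : 'rV[R]_n) (K : R) :
  0 <= K -> (forall i, `|r 0 i| <= K) -> opnorm (diag_mx r) <= K.
Proof.
move=> K0 rK; apply: ge_sup.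
  exists (vnorm (diag_mx r *m 0)); exists 0 => //=.
  by rewrite /vnorm big1 ?sqrtr0 ?ler01 // => i _; rewrite mxE expr0n.
move=> _ [v /= v1 <-]; apply: le_trans (vnorm_diag_le v K0 rK) _.
by rewrite ler_piMr.
Qed.

Lemma diag_mx_invmx_bounded (R : realType) n (r : 'rV[R]_n) (eps : R) :
  0 < eps -> (forall i, eps < r 0 i) ->
  (diag_mx r \in unitmx) && (opnorm (invmx (diag_mx r)) <= eps^-1).
Proof.
move=> eps0 epsr; have r_gt0 i : 0 < r 0 i by apply: lt_trans (epsr i).
have [-> ->] := diag_mx_unit_invmx (fun i => lt0r_neq0 (r_gt0 i)).
apply: opnorm_diag_le => [|i]; first by rewrite invr_ge0 ltW.
by rewrite mxE ger0_norm ?invr_ge0 ?ltW // ltf_pV2 ?posrE.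
Qed.

Lemma one_sub_scale_Dmat1 (R : realType) n m (G : bgraph n m) (c : R) :
  1%:M - c *: Dmat1 R G = diag_mx (\row_x (1 - c * (deg1 G x)%:R)).
Proof.
apply/matrixP => i j; rewrite !mxE.
by case: (i == j); rewrite ?mulr1n ?mulr0n ?subr0 ?mulr0 ?subrr.
Qed.

Lemma gprob_invmx_bounded (R : realType) n m (p d eps : R) :
  0 <= p <= 1 -> 0 < d -> 0 < eps ->
  1 - \sum_x gprob p (fun G : bgraph n m => (1 - eps) * d <= (deg1 G x)%:R) <=
  gprob p (fun G : bgraph n m =>
    let A := 1%:M - d^-1 *: Dmat1 R G in
    (A \in unitmx) && (opnorm (invmx A) <= eps^-1)).
Proof.
move=> p01 d0 eps0; apply: gprob_union_bound => // G small_deg.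
rewrite /= one_sub_scale_Dmat1; apply: diag_mx_invmx_bounded => // x.
have := small_deg x; rewrite -ltNge mxE => deg_lt.
have : d^-1 * (deg1 G x)%:R < 1 - eps by rewrite mulrC ltr_pdivrMr.
lra.
Qed.

Lemma nfloor_ge (R : realType) (gamma : R) m : 1 <= gamma -> (m <= nfloor gamma m)%N.
Proof.
move=> g1; have g0 : 0 <= gamma by apply: le_trans g1.
by rewrite truncn_ge_nat ?mulr_ge0 // ler_peMl.
Qed.

Lemma nfloor_gt (R : realType) (gamma : R) m : gamma * m%:R - 1 < (nfloor gamma m)%:R.
Proof. by rewrite ltrBlDr natr1 truncnS_gt. Qed.

Lemma ln_le_twice_sqrt (R : realType) (x : R) : 0 < x -> ln x <= 2 * Num.sqrt x.
Proof.
move=> x0; have sx0 : 0 < Num.sqrt x by rewrite sqrtr_gt0.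
have -> : ln x = 2 * ln (Num.sqrt x) by rewrite -{1}(sqr_sqrtr (ltW x0)) lnXn // mulr_natl.
have /le_ln1Dx : -1 < Num.sqrt x - 1 by lra.
rewrite addrCA subrr addr0 => ?; lra.
Qed.

Lemma le_mul_sqrt (R : rcfType) (s x y : R) :
  0 <= s -> 0 <= x -> x <= s ^+ 2 * y -> x <= s * Num.sqrt (x * y).
Proof.
move=> s0 x0 xsy; rewrite -[s]ger0_norm // -sqrtr_sqr -sqrtrM ?sqr_ge0 //.
rewrite -[X in X <= _]ger0_norm // -sqrtr_sqr; apply: ler_wsqrtr.
by rewrite mulrCA expr2 ler_wpM2l.
Qed.

Lemma ln_le_sqrt_mul (R : realType) (b : R) (n m : nat) :
  0 <= b -> (0 < m)%N -> (m <= n)%N -> 8 * b ^+ 2 <= m%:R ->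
  b * ln (n + m)%:R <= Num.sqrt (m%:R * n%:R).
Proof.
move=> b0 m0 mn bm; have N0 : 0 < (n + m)%:R :> R by rewrite ltr0n addn_gt0 m0 orbT.
apply: le_trans (_ : b * (2 * Num.sqrt (n + m)%:R) <= _).
  by rewrite ler_wpM2l // ln_le_twice_sqrt.
rewrite -[X in X <= _]ger0_norm ?mulr_ge0 ?sqrtr_ge0 //.
rewrite -sqrtr_sqr; apply: ler_wsqrtr.
rewrite !exprMn sqr_sqrtr ?ler0n // natrD.
(* 4 b^2 (n + m) <= 8 b^2 n <= m n *)
have : m%:R <= n%:R :> R by rewrite ler_nat.
have : 0 <= b ^+ 2 by rewrite sqr_ge0.
nra.
Qed.

Lemma sqr_sqr_powR_quarter (R : realType) (x : R) : 0 <= x -> (x `^ (1 / 4)) ^+ 2 ^+ 2 = x.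
Proof.
move=> x0; rewrite -exprM -powR_mulrn ?powR_ge0 // -powRrM.
by rewrite (_ : 1 / 4 * (2 * 2)%N%:R = 1) ?powRr1 // div1r mulVf // pnatr_eq0.
Qed.

Lemma hfun_subr1 (R : realType) (a : R) : a != 0 -> hfun (a - 1) = a * (ln a - (a - 1) / a).
Proof. by move=> a0; rewrite /hfun addrCA subrr addr0 mulrBr mulrCA divff ?mulr1. Qed.

Section DegreeTail.
Variables (R : realType) (a b : R).
Hypotheses (a_ge1 : 1 <= a) (b_gt0 : 0 < b).
Hypothesis rate_gt1 : 1 < b * (ln a - (a - 1) / a).

(* Half of the slack b (ln a - (a - 1) / a) - 1 becomes nu; the other half,
   scaled to tail_eta, absorbs both eps and the excess of m p / d over 1 / a,
   which tail_ratio bounds once m exceeds tail_threshold. *)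
Definition tail_nu := (b * (ln a - (a - 1) / a) - 1) / 2.
Definition tail_eta := tail_nu / b.
Definition tail_eps := tail_eta / (2 * (ln a + 1)).
Definition tail_ratio := (1 + tail_eta / 2) / a.
Definition tail_threshold :=
  (Num.truncn (tail_ratio ^+ 2 / tail_eta) + Num.truncn (8 * b ^+ 2)).+1.

Let a_gt0 : 0 < a. Proof. exact: lt_le_trans a_ge1. Qed.
Let ln_a_ge0 : 0 <= ln a. Proof. exact: ln_ge0. Qed.

Lemma tail_nu_gt0 : 0 < tail_nu.
Proof. by rewrite divr_gt0 // subr_gt0. Qed.

Lemma tail_eta_gt0 : 0 < tail_eta.
Proof. by rewrite divr_gt0 // tail_nu_gt0. Qed.

Lemma tail_eps_gt0 : 0 < tail_eps.
Proof. by rewrite divr_gt0 ?tail_eta_gt0 // mulr_gt0 // ltr_wpDl. Qed.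

Lemma tail_rate_ge :
  1 + tail_nu <= b * ((1 - tail_eps) * ln a - tail_ratio * (a - 1)).
Proof.
have eta0 := tail_eta_gt0.
have q1 : (a - 1) / a <= 1 by rewrite ler_pdivrMr // mul1r gerBl.
have epsL : tail_eps * ln a <= tail_eta / 2.
  rewrite /tail_eps mulrAC ler_pdivrMr ?mulr_gt0 ?ltr_wpDl //.
  have -> : tail_eta / 2 * (2 * (ln a + 1)) = tail_eta * (ln a + 1) by field.
  by rewrite ler_wpM2l ?lerDl // ltW.
have ratioE : tail_ratio * (a - 1) = (1 + tail_eta / 2) * ((a - 1) / a).
  by rewrite /tail_ratio mulrAC -mulrA.
have nuE : b * (ln a - (a - 1) / a - tail_eta) = 1 + tail_nu.
  by rewrite /tail_eta /tail_nu; field; rewrite !gt_eqF.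
have etaq : tail_eta * ((a - 1) / a) <= tail_eta by rewrite ler_piMr // ltW.
rewrite ratioE -nuE; apply: ler_wpM2l; [exact: ltW | lra].
Qed.

Variables (n m : nat).
Hypotheses (m_large : (tail_threshold <= m)%N) (m_le_n : (m <= n)%N).
Hypothesis n_gt : a ^+ 2 * m%:R - 1 < n%:R.

Let N := (n + m)%N.
Let d := b * ln N%:R.
Let p := d / Num.sqrt (m%:R * n%:R).

Let ratio_lt_m : tail_ratio ^+ 2 / tail_eta < m%:R.
Proof.
apply: lt_le_trans (truncnS_gt _) _; rewrite ler_nat.
by apply: leq_trans m_large; rewrite ltnS leq_addr.
Qed.

Let b_lt_m : 8 * b ^+ 2 < m%:R.
Proof.
apply: lt_le_trans (truncnS_gt _) _; rewrite ler_nat.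
by apply: leq_trans m_large; rewrite ltnS leq_addl.
Qed.

Let m_gt0 : (0 < m)%N.
Proof. by rewrite -(ltr_nat R); apply: le_lt_trans b_lt_m; rewrite mulr_ge0 ?sqr_ge0. Qed.

Let N_gt1 : 1 < N%:R :> R.
Proof. by rewrite ltr1n; exact: (leq_add (leq_trans m_gt0 m_le_n) m_gt0). Qed.

Let d_gt0 : 0 < d.
Proof. by rewrite mulr_gt0 // ln_gt0. Qed.

Let mn_gt0 : 0 < Num.sqrt (m%:R * n%:R) :> R.
Proof. by rewrite sqrtr_gt0 mulr_gt0 // ltr0n // (leq_trans m_gt0). Qed.

Lemma edge_prob_in01 : 0 <= p <= 1.
Proof.
rewrite /p divr_ge0 ?(ltW d_gt0) ?(ltW mn_gt0) //= ler_pdivrMr // mul1r.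
exact: ln_le_sqrt_mul (ltW b_gt0) m_gt0 m_le_n (ltW b_lt_m).
Qed.

Let m_le_ratio_n : m%:R <= tail_ratio ^+ 2 * n%:R.
Proof.
have eta0 := tail_eta_gt0.
have ra : tail_ratio * a = 1 + tail_eta / 2 by rewrite /tail_ratio divfK // gt_eqF.
have r2m : tail_ratio ^+ 2 < m%:R * tail_eta by rewrite -ltr_pdivrMr.
have e : tail_ratio ^+ 2 * (a ^+ 2 * m%:R - 1) =
    (1 + tail_eta + (tail_eta / 2) ^+ 2) * m%:R - tail_ratio ^+ 2.
  by rewrite mulrBr mulr1 mulrA -exprMn ra; field.
have : tail_ratio ^+ 2 * (a ^+ 2 * m%:R - 1) <= tail_ratio ^+ 2 * n%:R.
  by rewrite ler_wpM2l ?sqr_ge0 // ltW.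
have : 0 <= (tail_eta / 2) ^+ 2 * m%:R by rewrite mulr_ge0 ?sqr_ge0.
lra.
Qed.

Lemma tail_ratio_ge0 : 0 <= tail_ratio.
Proof. have eta0 := tail_eta_gt0; rewrite divr_ge0 ?(ltW a_gt0) //; lra. Qed.

Lemma expected_deg_le : m%:R * p <= d * tail_ratio.
Proof.
rewrite /p mulrCA ler_wpM2l ?(ltW d_gt0) // ler_pdivrMr //.
exact: le_mul_sqrt tail_ratio_ge0 (ler0n _ _) m_le_ratio_n.
Qed.

Lemma deg1_tail_le (x : 'I_n) :
  gprob p (fun G : bgraph n m => (1 - tail_eps) * d <= (deg1 G x)%:R) <=
  expR (- ((1 + tail_nu) * ln N%:R)).
Proof.
apply: le_trans (deg1_chernoff m edge_prob_in01 _ x a_ge1) _; rewrite ler_expR.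
have lnN0 : 0 <= ln N%:R :> R by rewrite ln_ge0 // ltW.
have rate := ler_wpM2l lnN0 tail_rate_ge.
have mean : m%:R * p * (a - 1) <= d * tail_ratio * (a - 1).
  by rewrite ler_wpM2r ?subr_ge0 // expected_deg_le.
have expE : - ((1 - tail_eps) * d * ln a) + d * tail_ratio * (a - 1) =
    - (ln N%:R * (b * ((1 - tail_eps) * ln a - tail_ratio * (a - 1)))).
  by rewrite /d; ring.
lra.
Qed.

Lemma sum_deg1_tail_le :
  \sum_x gprob p (fun G : bgraph n m => (1 - tail_eps) * d <= (deg1 G x)%:R) <=
  N%:R `^ (- tail_nu).
Proof.
have N0 : 0 < N%:R :> R by apply: lt_trans N_gt1.
apply: le_trans (ler_sum _ (fun x _ => deg1_tail_le x)) _.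
rewrite sumr_const card_ord -[_ *+ n]mulr_natr.
apply: le_trans (_ : expR (- ((1 + tail_nu) * ln N%:R)) * N%:R <= _).
  by rewrite ler_wpM2l ?expR_ge0 // ler_nat leq_addr.
rewrite /powR gt_eqF // -{2}(lnK N0) -expRD ler_expR; lra.
Qed.

Lemma invmx_bounded_whp :
  1 - N%:R `^ (- tail_nu) <=
  gprob p (fun G : bgraph n m =>
    let A := 1%:M - d^-1 *: Dmat1 R G in
    (A \in unitmx) && (opnorm (invmx A) <= tail_eps^-1)).
Proof.
apply: le_trans (gprob_invmx_bounded n m edge_prob_in01 d_gt0 tail_eps_gt0).
by rewrite lerD2l lerN2 sum_deg1_tail_le.
Qed.

End DegreeTail.

Theorem lemma6p7 (R : realType) (gamma b : R) :
  1 <= gamma -> 0 < b ->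
  let kappa := gamma `^ (1 / 4) in
  0 < hfun (kappa ^+ 2 - 1) ->
  kappa ^+ 2 / hfun (kappa ^+ 2 - 1) < b ->
  exists eps nu : R, 0 < eps /\ 0 < nu /\
    exists M : nat, forall m : nat, (M <= m)%N ->
      let n := nfloor gamma m in
      let N := (n + m)%N in
      let d := b * ln (N%:R : R) in
      let p := d / Num.sqrt (m%:R * n%:R) in
      1 - (N%:R : R) `^ (- nu) <=
        gprob p (fun G : bgraph n m =>
          let A := 1%:M - d^-1 *: Dmat1 R G in
          (A \in unitmx) && (opnorm (invmx A) <= eps^-1)).
Proof.
move=> g1 b0 kappa; have g0 : 0 <= gamma by apply: le_trans g1.
have a_sqr : kappa ^+ 2 ^+ 2 = gamma := sqr_sqr_powR_quarter g0.
set a := kappa ^+ 2 in a_sqr *.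
have a_ge0 : 0 <= a := sqr_ge0 kappa.
have a1 : 1 <= a by nra.
have a0 : 0 < a by apply: lt_le_trans a1.
rewrite hfun_subr1 ?gt_eqF // => ac0 hb.
have c0 : 0 < ln a - (a - 1) / a by rewrite -(pmulr_rgt0 _ a0).
have rate : 1 < b * (ln a - (a - 1) / a).
  by move: hb; rewrite invfM mulrA divff ?gt_eqF // mul1r -div1r ltr_pdivrMr.
exists (tail_eps a b), (tail_nu a b).
split; first exact: tail_eps_gt0.
split; first exact: tail_nu_gt0.
exists (tail_threshold a b) => m m_large.
apply: invmx_bounded_whp => //; first exact: nfloor_ge.
by rewrite a_sqr nfloor_gt.
Qed.
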